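(* Let $(X,\mathcal{R})$ be an association scheme with rank $d+1\geq 3$. If some relation $R\in\mathcal{R}$ has a connected scheme graph of valency three, then $(X,\mathcal{R})$ is partially metric with respect to $R$; that is, the set of pairs at distance $2$ in the scheme graph of $R$ is a single relation of $\mathcal{R}$.
   Context: A (symmetric) association scheme with rank $d+1$ on a finite set $X$ is a partition $\mathcal{R}=\{R_0,\dots,R_d\}$ of $X\times X$ with $R_0$ the diagonal, each $R_i$ symmetric, and numbers $p^h_{ij}$ such that for every $(x,y)\in R_h$ the number of $z$ with $(x,z)\in R_i$, $(z,y)\in R_j$ equals $p^h_{ij}$. The scheme graph of $R_i$ ($i>0$) is the graph on $X$ with $x\sim y$ iff $(x,y)\in R_i$. The scheme is partially metric with respect to a connected relation $R_1$ if the distance-$2$ relation of the scheme graph of $R_1$ is a relation of the scheme. *)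

From mathcomp Require Import all_boot.
Set Implicit Arguments. Unset Strict Implicit. Unset Printing Implicit Defensive.

(* A symmetric association scheme of rank d+1 on a finite set X is encoded by
   its "relation-index" map r : X -> X -> 'I_(d.+1): the pair (x,y) lies in
   R_(r x y). *)
Definition is_assoc_scheme (X : finType) (d : nat) (r : X -> X -> 'I_d.+1) : Prop :=
  [/\ forall i : 'I_d.+1, exists x y, r x y = i,
      forall x y, (r x y == ord0) = (x == y),
      forall x y, r x y = r y x &
      exists p : 'I_d.+1 -> 'I_d.+1 -> 'I_d.+1 -> nat,
        forall (h i j : 'I_d.+1) (x y : X), r x y = h ->
          #|[set z | (r x z == i) && (r z y == j)]| = p h i j].

Definition scheme_graph (X : finType) (d : nat) (r : X -> X -> 'I_d.+1)
  (i : 'I_d.+1) : rel X := fun x y => r x y == i.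

Definition connected_graph (X : finType) (e : rel X) : Prop :=
  forall x y, connect e x y.

Definition regular_of_valency (X : finType) (e : rel X) (k : nat) : Prop :=
  forall x, #|[set y | e x y]| = k.

Definition dist2 (X : finType) (e : rel X) (x y : X) : Prop :=
  x <> y /\ ~~ e x y /\ exists z, e x z && e z y.

Definition partially_metric (X : finType) (d : nat) (r : X -> X -> 'I_d.+1)
  (i : 'I_d.+1) : Prop :=
  exists h : 'I_d.+1, forall x y, dist2 (scheme_graph r i) x y <-> r x y = h.

From mathcomp Require Import all_boot.
Set Implicit Arguments. Unset Strict Implicit. Unset Printing Implicit Defensive.

(* Let y be a vertex with neighbours a1, a2, a3 in the scheme graph of R_i.
   For every neighbour a of y, the number of neighbours b of y with
   (b, a) in R_h is p^i_{ih}, so the multiset {r a1 a, r a2 a, r a3 a} does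
   not depend on a.  Comparing a = a1, a2, a3 shows that the three pairs of
   neighbours of y lie in one relation R_g, and then p^i_{ih} = [h = 0] +
   2 [h = g] determines g independently of y.  R_g is not R_i: otherwise a
   connected graph would be complete and the scheme would have rank 2.
   Hence every pair at distance 2 lies in R_g, and conversely every pair in
   R_g has p^g_{ii} > 0 common neighbours and is neither equal nor adjacent. *)

Lemma cards3_eq (T : finType) (A : {set T}) : #|A| = 3 ->
  exists a1 a2 a3, [/\ a1 != a2, a1 != a3, a2 != a3 & A = [set a1; a2; a3]].
Proof.
rewrite cardE => sizeA; have uniqA := enum_uniq (pred_of_set A).
case E: (enum A) sizeA uniqA => [|a1 [|a2 [|a3 [|? ?]]]] //= _.
rewrite !inE !negb_or !andbT => /andP[/andP[n12 n13] n23].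
exists a1, a2, a3; split=> //; apply/setP=> b.
by rewrite -[b \in A]mem_enum E !inE orbA.
Qed.

Lemma card_set3_filter (T : finType) (a1 a2 a3 : T) (P : pred T) :
  a1 != a2 -> a1 != a3 -> a2 != a3 ->
  #|[set b in [set a1; a2; a3] | P b]| = P a1 + P a2 + P a3.
Proof.
move=> n12 n13 n23.
rewrite (cardsD1 a1) (cardsD1 a2 (_ :\ a1)) (cardsD1 a3 (_ :\ a1 :\ a2)).
have -> : [set b in [set a1; a2; a3] | P b] :\ a1 :\ a2 :\ a3 = set0.
  by apply/setP=> b; rewrite !inE; do !case: eqP.
rewrite cards0 addn0 !inE !eqxx [a2 == a1]eq_sym [a3 == a1]eq_sym.
by rewrite [a3 == a2]eq_sym (negbTE n12) (negbTE n13) (negbTE n23) /= !addnA.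
Qed.

Section SchemeGraph.

Variables (X : finType) (d : nat) (r : X -> X -> 'I_d.+1).
Variable p : 'I_d.+1 -> 'I_d.+1 -> 'I_d.+1 -> nat.
Hypothesis r_diag : forall x y, (r x y == ord0) = (x == y).
Hypothesis r_sym : forall x y, r x y = r y x.
Hypothesis r_inter : forall (h j k : 'I_d.+1) (x y : X), r x y = h ->
  #|[set z | (r x z == j) && (r z y == k)]| = p h j k.
Variable i : 'I_d.+1.

Definition nbr_pairs_in (g : 'I_d.+1) : Prop :=
  forall y a b, r y a = i -> r y b = i -> a != b -> r a b = g.

Lemma r_refl x : r x x = ord0.
Proof. by apply/eqP; rewrite r_diag. Qed.

Lemma rank_le1_of_complete :
  (forall j : 'I_d.+1, exists x y, r x y = j) ->
  (forall x w, x != w -> r x w = i) -> d <= 1.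
Proof.
move=> r_onto complete.
have sub : [set: 'I_d.+1] \subset [set ord0; i].
  apply/subsetP=> j _; have [x [w <-]] := r_onto j; rewrite !inE.
  have [->|/complete ->] := eqVneq x w; first by rewrite r_refl eqxx.
  by rewrite eqxx orbT.
have := subset_leq_card sub; rewrite cardsT card_ord cards2 ltnS.
by move/leq_trans; apply; apply: leq_b1.
Qed.

Lemma connect_nbr_pairs_in_adj x w : nbr_pairs_in i ->
  connect (scheme_graph r i) x w -> x = w \/ r x w = i.
Proof.
move=> clique /connectP[q q_path ->] {w}.
elim/last_ind: q q_path => [|q v IHq]; first by left.
rewrite rcons_path last_rcons => /andP[/IHq [<-|xq] /eqP qv]; first by right.
have [<-|xv] := eqVneq x v; [by left | right].
by apply: (clique (last x q)); rewrite // r_sym.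
Qed.

Lemma complete_of_nbr_pairs_in_adj :
  connected_graph (scheme_graph r i) -> nbr_pairs_in i ->
  forall x w, x != w -> r x w = i.
Proof.
move=> conn clique x w xw.
by case: (connect_nbr_pairs_in_adj clique (conn x w)) => // /eqP; rewrite (negbTE xw).
Qed.

Lemma common_nbr_gt0 y a b : r y a = i -> r y b = i -> 0 < p (r a b) i i.
Proof.
move=> ya yb; rewrite -(r_inter i i (erefl (r a b))).
by apply/card_gt0P; exists y; rewrite inE r_sym ya yb eqxx.
Qed.

Section Cubic.

Hypothesis cubic : regular_of_valency (scheme_graph r i) 3.

Lemma cubic_nbr y : exists a1 a2 a3, [/\ a1 != a2, a1 != a3, a2 != a3 &
  forall b, (r y b == i) = [|| b == a1, b == a2 | b == a3]].
Proof.
have [a1 [a2 [a3 [n12 n13 n23 Ny]]]] := cards3_eq (cubic y).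
exists a1, a2, a3; split=> // b.
by move/setP/(_ b): Ny; rewrite !inE -orbA.
Qed.

Lemma exists_nbr_pair y : exists a b, [/\ r y a = i, r y b = i & a != b].
Proof.
have [a1 [a2 [a3 [n12 _ _ Ny]]]] := cubic_nbr y.
by exists a1, a2; split=> //; apply/eqP; rewrite Ny eqxx ?orbT.
Qed.

Lemma nbr_pair_rel y : exists2 g : 'I_d.+1,
  forall a b, r y a = i -> r y b = i -> a != b -> r a b = g &
  forall h, p i i h = (ord0 == h) + (g == h) + (g == h).
Proof.
have [a1 [a2 [a3 [n12 n13 n23 Ny]]]] := cubic_nbr y.
have count a h : r y a = i ->
    p i i h = (r a1 a == h) + (r a2 a == h) + (r a3 a == h).
  move=> ya; rewrite -(r_inter i h ya).
  rewrite -[RHS](card_set3_filter (fun b => r b a == h) n12 n13 n23).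
  by apply: eq_card => b; rewrite !inE Ny -orbA.
have [y1 y2 y3] : [/\ r y a1 = i, r y a2 = i & r y a3 = i].
  by split; apply/eqP; rewrite Ny eqxx ?orbT.
have c1 := count _ _ y1; rewrite r_refl in c1.
have c2 := count _ _ y2; rewrite r_refl in c2.
have c3 := count _ _ y3; rewrite r_refl in c3.
rewrite (r_sym a1 a2) (r_sym a1 a3) (r_sym a2 a3) in c2 c3.
have r31 : r a3 a1 = r a3 a2.
  by have := c1 (r a3 a1); rewrite c2 eqxx; do ?case: eqP.
have r21 : r a2 a1 = r a3 a2.
  by have := c1 (r a2 a1); rewrite c3 eqxx; do ?case: eqP.
exists (r a2 a1) => [a b /eqP ya /eqP yb|h]; last by rewrite c1 r31 r21.
move: ya yb; rewrite !Ny => /or3P[]/eqP-> /or3P[]/eqP->; rewrite ?eqxx //.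
all: by rewrite ?(r_sym a1 a2) ?(r_sym a1 a3) ?(r_sym a2 a3) ?r21 ?r31.
Qed.

Lemma nbr_pairs_in_rel y0 a0 b0 :
  r y0 a0 = i -> r y0 b0 = i -> a0 != b0 -> nbr_pairs_in (r a0 b0).
Proof.
move=> ya0 yb0 ab0 y a b ya yb ab.
have [g -> // pg] := nbr_pair_rel y; have [g0 -> // pg0] := nbr_pair_rel y0.
by have := pg g; rewrite pg0 eqxx; do ?case: eqP.
Qed.

End Cubic.

Lemma dist2_iff_rel (g : 'I_d.+1) :
  g != ord0 -> g != i -> 0 < p g i i -> nbr_pairs_in g ->
  forall x y, dist2 (scheme_graph r i) x y <-> r x y = g.
Proof.
move=> g0 gi pg nbr_g x y; split.
  case=> /eqP xy [_ [z /andP[/eqP xz /eqP zy]]].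
  by apply: (nbr_g z); rewrite // r_sym.
move=> xy; split; [|split].
- by move=> exy; move: g0; rewrite -xy exy r_refl eqxx.
- by rewrite /scheme_graph xy.
- have /card_gt0P[z] : 0 < #|[set z | (r x z == i) && (r z y == i)]|.
    by rewrite (r_inter _ _ xy).
  by rewrite inE; exists z.
Qed.

End SchemeGraph.

Theorem lemma2p3 (X : finType) (d : nat) (r : X -> X -> 'I_d.+1)
  (i : 'I_d.+1) :
  is_assoc_scheme r -> 2 <= d ->
  connected_graph (scheme_graph r i) ->
  regular_of_valency (scheme_graph r i) 3 ->
  partially_metric r i.
Proof.
case=> r_onto r_diag r_sym [p r_inter] d2 conn cubic.
have [y0 _] := r_onto ord0.
have [a0 [b0 [ya0 yb0 ab0]]] := exists_nbr_pair cubic y0.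
have nbr_g := nbr_pairs_in_rel r_diag r_sym r_inter cubic ya0 yb0 ab0.
have g0 : r a0 b0 != ord0 by rewrite r_diag.
have gi : r a0 b0 != i.
  apply: contraTneq d2 => gi; rewrite -ltnNge ltnS.
  apply: (rank_le1_of_complete r_diag (i := i) r_onto).
  apply: (complete_of_nbr_pairs_in_adj r_sym conn) => y a b ya yb ab.
  by rewrite -gi; apply: nbr_g ya yb ab.
have pg := common_nbr_gt0 r_sym r_inter ya0 yb0.
by exists (r a0 b0); apply: (dist2_iff_rel r_diag r_sym r_inter g0 gi pg nbr_g).
Qed.
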